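(* Let $p>1$, $p'=\frac{p}{p-1}$, and let $b\in C^1([0,\infty))$ satisfy $b(t)>0$ for $t\ge0$ and $\limsup_{t\to\infty}\frac{|b'(t)|}{b(t)^2}<1$. Let $\Phi(t)=\int_t^\infty\exp(-\int_t^sb(\sigma)d\sigma)\,ds$. Let $\eta\in C^2([0,\infty))$ satisfy $\eta=1$ on $[0,1/2]$, $\eta$ decreasing on $(1/2,1)$, $\eta=0$ on $[1,\infty)$, and let $\eta^*(s)=0$ for $s\in[0,1/2)$, $\eta^*(s)=\eta(s)$ for $s\ge 1/2$. For $R>0$ set $$s_R(x,t)=R^{-1}\Big(1+|x|^2+\int_0^t\Phi(\sigma)\,d\sigma\Big),\quad \psi_R=[\eta(s_R)]^{2p'},\quad \psi_R^*=[\eta^*(s_R)]^{2p'},$$ on $\mathbb{R}^N\times[0,\infty)$, and $P(R)=\{(x,t)\in\mathbb{R}^N\times[0,\infty): 1+|x|^2+\int_0^t\Phi(\sigma)d\sigma\le R\}$. Then: (i) $\psi_R(x,t)=1$ for $(x,t)\in P(R/2)$ and $\psi_R(x,t)=0$ for $(x,t)\notin P(R)$; (ii) there is $C_1>0$ such that $|\partial_t\psi_R(x,t)|\le C_1R^{-1}\Phi(t)[\psi_R^*(x,t)]^{1/p}$ for all $R>0$ and $(x,t)\in P(R)$; (iii) there is $C_2>0$ such that $|\Delta\psi_R(x,t)|\le C_2R^{-1}[\psi_R^*(x,t)]^{1/p}$ for all $R>0$ and $(x,t)\in P(R)$; (iv) if in addition $1/b\notin L^1(0,\infty)$, there is $C_3>0$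 such that $|\partial_t^2\psi_R(x,t)|\le C_3R^{-1}[\psi_R^*(x,t)]^{1/p}$ for all $R>0$ and $(x,t)\in P(R)$. *)

From Stdlib Require Import Reals.
From Coquelicot Require Import Coquelicot.
Open Scope R_scope.

(* Points of R^N are represented by x : nat -> R, of which only the
   coordinates 0..N-1 are used. *)
Fixpoint normsq (N : nat) (x : nat -> R) : R :=
  match N with
  | O => 0
  | S n => normsq n x + (x n) ^ 2
  end.

Fixpoint sumN (N : nat) (f : nat -> R) : R :=
  match N with
  | O => 0
  | S n => sumN n f + f n
  end.

Definition upd (x : nat -> R) (i : nat) (h : R) : nat -> R :=
  fun j => if Nat.eqb j i then h else x j.

Definition laplacian (N : nat) (u : (nat -> R) -> R) (x : nat -> R) : R :=
  sumN N (fun i => Derive (fun h => Derive (fun h' => u (upd x i h')) h) (x i)).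

(* real power y^q for y > 0, with the convention 0^q = 0 (q > 0) *)
Definition rpow (y q : R) : R := if Rle_dec y 0 then 0 else Rpower y q.

Definition Phi (b : R -> R) (t : R) : R :=
  RInt_gen (fun s => exp (- RInt b t s)) (at_point t) (Rbar_locally p_infty).

Definition rho (b : R -> R) (N : nat) (x : nat -> R) (t : R) : R :=
  1 + normsq N x + RInt (Phi b) 0 t.

Definition sR (b : R -> R) (N : nat) (R0 : R) (x : nat -> R) (t : R) : R :=
  / R0 * rho b N x t.

Definition etaStar (eta : R -> R) (s : R) : R :=
  if Rlt_dec s (1/2) then 0 else eta s.

Definition conj_exp (p : R) : R := p / (p - 1).

Definition psiR (b eta : R -> R) (p : R) (N : nat) (R0 : R)
  (x : nat -> R) (t : R) : R :=
  rpow (eta (sR b N R0 x t)) (2 * conj_exp p).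

Definition psiRstar (b eta : R -> R) (p : R) (N : nat) (R0 : R)
  (x : nat -> R) (t : R) : R :=
  rpow (etaStar eta (sR b N R0 x t)) (2 * conj_exp p).

Definition inP (b : R -> R) (N : nat) (R0 : R) (x : nat -> R) (t : R) : Prop :=
  0 <= t /\ rho b N x t <= R0.

From Stdlib Require Import Reals Lra Lia.
From Coquelicot Require Import Coquelicot.
Open Scope R_scope.

(* With [B = int_0^t b], [Phi = exp B * int_t^oo exp (- B)] solves
   [Phi' = b Phi - 1].  The limsup hypothesis makes
   [exp (- B) / b + (1 - c) int_0^t exp (- B)] eventually nonincreasing, so
   [Phi] is finite and [b Phi] is bounded, say by [M]; then
   [(Phi ^ 2)' = 2 Phi (b Phi - 1) <= 2 M Phi], whence
   [Phi ^ 2 <= K (1 + int_0^t Phi) <= K R] on [P(R)].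
   Next, [psi_R = G (s_R)] with [G = eta ^ q], [q = 2 p'], and [G'], [G'']
   vanish below [1/2] and are bounded on [[1/2, 1]] by multiples of
   [eta ^ (q - 2) = (eta* ^ q) ^ (1/p)].  The chain rule with
   [d_t s_R = Phi / R], [d_t^2 s_R = (b Phi - 1) / R] and
   [d_(x_i) s_R = 2 x_i / R], where [x_i ^ 2 <= R] on [P(R)], gives
   (ii)-(iv). *)

(* Coquelicot's [Derive f x] is the limit of the difference quotients at the
   points [x + /(n+1)], so it only sees [f] to the right of [x]. *)
Lemma Derive_ext_right (f g : R -> R) t :
  (forall y, t <= y -> f y = g y) -> Derive f t = Derive g t.
Proof.
  intros Hfg. unfold Derive, Lim. f_equal. apply Lim_seq_ext. intros n; simpl.
  assert (0 < / (INR n + 1)) by (apply Rinv_0_lt_compat; pose proof (pos_INR n); lra).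
  rewrite !Hfg; lra.
Qed.

Lemma locally_Rabs (x r : R) (P : R -> Prop) :
  0 < r -> (forall z, Rabs (z - x) < r -> P z) -> locally x P.
Proof. intros Hr HP. exists (mkposreal r Hr). intros z Hz. now apply HP. Qed.

Lemma locally_lt (s a : R) : s < a -> locally s (fun z => z < a).
Proof.
  intros Hs. apply locally_Rabs with (a - s); [lra|]. intros z Hz. apply Rabs_def2 in Hz. lra.
Qed.

Lemma locally_gt (s a : R) : a < s -> locally s (fun z => a < z).
Proof.
  intros Hs. apply locally_Rabs with (s - a); [lra|]. intros z Hz. apply Rabs_def2 in Hz. lra.
Qed.

Lemma continuous_bounded_segment (f : R -> R) a b : a <= b ->
  (forall x, a <= x <= b -> continuous f x) ->
  exists K, 0 <= K /\ forall x, a <= x <= b -> Rabs (f x) <= K.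
Proof.
  intros Hab Hf.
  destruct (continuity_ab_maj f a b Hab) as [xM [HM _]].
  { intros x Hx. apply continuity_pt_filterlim, Hf, Hx. }
  destruct (continuity_ab_min f a b Hab) as [xm [Hm _]].
  { intros x Hx. apply continuity_pt_filterlim, Hf, Hx. }
  exists (Rabs (f xM) + Rabs (f xm)). split.
  - pose proof (Rabs_pos (f xM)); pose proof (Rabs_pos (f xm)); lra.
  - intros x Hx. specialize (HM x Hx). specialize (Hm x Hx).
    apply Rabs_le. pose proof (Rle_abs (f xM)). pose proof (Rabs_pos (f xm)).
    pose proof (Rabs_pos (f xM)). pose proof (Rle_abs (- f xm)).
    rewrite Rabs_Ropp in *. lra.
Qed.

Lemma nonincreasing_of_derive_nonpos (f df : R -> R) a b : a <= b ->
  (forall x, a <= x <= b -> is_derive f x (df x)) ->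
  (forall x, a <= x <= b -> df x <= 0) -> f b <= f a.
Proof.
  intros Hab Hd Hneg.
  destruct (MVT_gen f a b df) as [c [Hc Heq]].
  - intros x Hx. apply Hd. rewrite Rmin_left, Rmax_right in Hx; lra.
  - intros x Hx. apply continuity_pt_filterlim, (ex_derive_continuous f).
    eexists. apply Hd. rewrite Rmin_left, Rmax_right in Hx; lra.
  - rewrite Rmin_left, Rmax_right in Hc by lra.
    assert (df c * (b - a) <= 0) by (apply Rmult_le_0_r; [apply Hneg|]; lra).
    lra.
Qed.

Lemma is_derive_eq_deriv (f : R -> R) (x l l' : R) :
  is_derive f x l -> l = l' -> is_derive f x l'.
Proof. now intros H <-. Qed.

Lemma is_derive_Rplus (f g : R -> R) (x df dg : R) :
  is_derive f x df -> is_derive g x dg ->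
  is_derive (fun y => f y + g y) x (df + dg).
Proof. exact (is_derive_plus (K:=R_AbsRing) f g x df dg). Qed.

Lemma is_derive_Rmult (f g : R -> R) (x df dg : R) :
  is_derive f x df -> is_derive g x dg ->
  is_derive (fun y => f y * g y) x (df * g x + f x * dg).
Proof. intros Hf Hg. exact (is_derive_mult f g x df dg Hf Hg Rmult_comm). Qed.

Lemma is_derive_Rcomp (f g : R -> R) (x df dg : R) :
  is_derive f (g x) df -> is_derive g x dg ->
  is_derive (fun y => f (g y)) x (dg * df).
Proof. exact (is_derive_comp (K:=R_AbsRing) f g x df dg). Qed.

Lemma is_derive_Rconst (a x : R) : is_derive (fun _ => a) x 0.
Proof. apply is_derive_Reals, derivable_pt_lim_const. Qed.

Lemma is_derive_Rid (x : R) : is_derive (fun y => y) x 1.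
Proof. apply is_derive_Reals, derivable_pt_lim_id. Qed.

Lemma is_derive_Rscal (f : R -> R) (k x df : R) :
  is_derive f x df -> is_derive (fun y => k * f y) x (k * df).
Proof. exact (is_derive_scal f x k df). Qed.

Lemma is_derive_continuous (f : R -> R) (x l : R) : is_derive f x l -> continuous f x.
Proof. intros H. apply (ex_derive_continuous (K:=R_AbsRing) (V:=R_NormedModule)). now exists l. Qed.

Lemma ex_RInt_continuous_R (f : R -> R) a b :
  (forall x, continuous f x) -> ex_RInt f a b.
Proof. intros Hf. apply (ex_RInt_continuous (V:=R_CompleteNormedModule)). auto. Qed.

Lemma is_derive_RInt_0 (f : R -> R) (t : R) :
  (forall x, continuous f x) -> is_derive (fun u => RInt f 0 u) t (f t).
Proof.
  intros Hf. apply (is_derive_RInt f (fun u => RInt f 0 u) 0 t); [|apply Hf].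
  apply filter_forall. intros u.
  apply (RInt_correct (V:=R_CompleteNormedModule)), ex_RInt_continuous_R, Hf.
Qed.

Lemma RInt_sub_0 (f : R -> R) a b :
  (forall x, continuous f x) -> RInt f a b = RInt f 0 b - RInt f 0 a.
Proof.
  intros Hf.
  pose proof (RInt_Chasles (V:=R_CompleteNormedModule) f 0 a b
                (ex_RInt_continuous_R f 0 a Hf) (ex_RInt_continuous_R f a b Hf)) as Hsplit.
  change (RInt f 0 a + RInt f a b = RInt f 0 b) in Hsplit. lra.
Qed.

Section PhiExtension.

Variable b : R -> R.

(* [b] is continued by the constant [b 0] to the left of [0], so that all the
   functions below are differentiable on the whole line.  [decay_total], the
   supremum of [decay_int], is [int_0^oo exp (- bint)]; hence
   [Phi_ext t = exp (bint t) * int_t^oo exp (- bint)]. *)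
Definition bext t := b (Rmax t 0).
Definition bint t := RInt bext 0 t.
Definition decay s := exp (- bint s).
Definition decay_int t := RInt decay 0 t.
Definition decay_total := real (Lub_Rbar (fun y => exists S, y = decay_int S)).
Definition Phi_ext t := exp (bint t) * (decay_total - decay_int t).

Hypothesis Hb_der : forall t, 0 <= t -> ex_derive b t.
Hypothesis Hb_pos : forall t, 0 <= t -> 0 < b t.

Lemma bext_pos t : 0 < bext t.
Proof. apply Hb_pos, Rmax_r. Qed.

Lemma bext_continuous t : continuous bext t.
Proof.
  apply (continuous_comp (fun t => Rmax t 0) b).
  - apply continuous_ext with (fun t => (t + Rabs t) * / 2).
    + intros x. unfold Rmax, Rabs. destruct (Rle_dec x 0), (Rcase_abs x); lra.
    + apply (continuous_scal_l (fun t => t + Rabs t) (/ 2)).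
      apply (continuous_plus (fun t => t) Rabs); [apply continuous_id | apply continuous_Rabs].
  - apply (ex_derive_continuous (K:=R_AbsRing) (V:=R_NormedModule)), Hb_der, Rmax_r.
Qed.

Lemma is_derive_bext t : 0 < t -> is_derive bext t (Derive b t).
Proof.
  intros Ht. apply is_derive_ext_loc with b.
  - apply locally_Rabs with t; [lra|]. intros z Hz. apply Rabs_def2 in Hz.
    unfold bext. rewrite Rmax_left by lra. reflexivity.
  - apply Derive_correct, Hb_der. lra.
Qed.

Lemma is_derive_bint t : is_derive bint t (bext t).
Proof. apply is_derive_RInt_0, bext_continuous. Qed.

Lemma bint_le x y : x <= y -> bint x <= bint y.
Proof.
  intros Hxy. assert (- bint y <= - bint x); [|lra].
  apply (nonincreasing_of_derive_nonpos (fun u => - bint u) (fun u => - bext u)); auto.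
  - intros u _. apply (is_derive_opp (K:=R_AbsRing) bint u), is_derive_bint.
  - intros u _. pose proof (bext_pos u); lra.
Qed.

Lemma decay_pos s : 0 < decay s.
Proof. apply exp_pos. Qed.

Lemma is_derive_decay s : is_derive decay s (- bext s * decay s).
Proof.
  eapply is_derive_eq_deriv.
  - apply (is_derive_Rcomp exp (fun s => - bint s)); [apply is_derive_exp|].
    apply (is_derive_opp (K:=R_AbsRing) bint s), is_derive_bint.
  - reflexivity.
Qed.

Lemma is_derive_decay_int t : is_derive decay_int t (decay t).
Proof.
  apply is_derive_RInt_0. intros x. eapply is_derive_continuous, is_derive_decay.
Qed.

Lemma decay_int_le x y : x <= y -> decay_int x <= decay_int y.
Proof.
  intros Hxy. assert (- decay_int y <= - decay_int x); [|lra].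
  apply (nonincreasing_of_derive_nonpos (fun u => - decay_int u) (fun u => - decay u)); auto.
  - intros u _. apply (is_derive_opp (K:=R_AbsRing) decay_int u), is_derive_decay_int.
  - intros u _. pose proof (decay_pos u); lra.
Qed.

Lemma decay_int_0 : decay_int 0 = 0.
Proof. exact (RInt_point 0 decay). Qed.

Variables c T : R.
Hypothesis Hc : c < 1.
Hypothesis HT : forall t, T <= t -> Rabs (Derive b t) / (b t) ^ 2 <= c.

(* For [t >= T] the function [decay / bext + (1 - c) * decay_int] is
   nonincreasing, its derivative being [- decay * (c + b' / b ^ 2)]. *)
Lemma decay_int_tail t S : Rmax T 1 <= t ->
  decay_int S <= decay_int t + decay t / bext t / (1 - c).
Proof.
  intros Ht. pose proof (Rmax_l T 1). pose proof (Rmax_r T 1).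
  assert (Htail : 0 <= decay t / bext t / (1 - c)).
  { pose proof (decay_pos t). pose proof (bext_pos t).
    apply Rdiv_le_0_compat; [apply Rdiv_le_0_compat|]; lra. }
  destruct (Rle_dec S t) as [HSt|HSt].
  { pose proof (decay_int_le S t HSt). lra. }
  set (k := fun u => decay u * / bext u + (1 - c) * decay_int u).
  assert (Hk : k S <= k t).
  { apply (nonincreasing_of_derive_nonpos k
             (fun u => decay u * (- c - Derive b u / (b u) ^ 2))); [lra| |].
    - intros u Hu. pose proof (Hb_pos u ltac:(lra)).
      eapply is_derive_eq_deriv.
      + apply is_derive_Rplus; [apply is_derive_Rmult|].
        * apply is_derive_decay.
        * apply is_derive_inv; [apply is_derive_bext; lra|].
          pose proof (bext_pos u); lra.
        * apply is_derive_Rscal, is_derive_decay_int.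
      + unfold bext. rewrite Rmax_left by lra. field; lra.
    - intros u Hu. pose proof (decay_pos u). apply Rmult_le_0_l; [lra|].
      specialize (HT u ltac:(lra)). pose proof (Hb_pos u ltac:(lra)).
      assert (0 < b u ^ 2) by (apply pow_lt; lra).
      assert (- Derive b u / b u ^ 2 <= Rabs (Derive b u) / b u ^ 2).
      { apply Rmult_le_compat_r; [left; apply Rinv_0_lt_compat; lra|].
        rewrite <- Rabs_Ropp. apply Rle_abs. }
      unfold Rdiv in *. lra. }
  unfold k in Hk. pose proof (decay_pos S). pose proof (bext_pos S).
  assert (0 <= decay S * / bext S) by (apply Rdiv_le_0_compat; lra).
  assert (Hdiff : (1 - c) * (decay_int S - decay_int t) <= decay t / bext t) by (unfold Rdiv; lra).
  assert (decay_int S - decay_int t <= decay t / bext t / (1 - c)); [|lra].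
  apply (Rmult_le_reg_l (1 - c)); [lra|].
  pose proof (bext_pos t). replace ((1 - c) * (decay t / bext t / (1 - c)))
    with (decay t / bext t) by (field; lra).
  exact Hdiff.
Qed.

Lemma decay_total_lub : is_lub_Rbar (fun y => exists S, y = decay_int S) decay_total.
Proof.
  set (U := decay_int (Rmax T 1) + decay (Rmax T 1) / bext (Rmax T 1) / (1 - c)).
  pose proof (Lub_Rbar_correct (fun y => exists S, y = decay_int S)) as Hlub.
  unfold decay_total. destruct (Lub_Rbar _) as [l| |]; [exact Hlub| |].
  - exfalso. apply (proj2 Hlub U). intros y [S ->]. apply decay_int_tail, Rle_refl.
  - exfalso. apply (proj1 Hlub (decay_int 0)). now exists 0.
Qed.

Lemma decay_int_le_total S : decay_int S <= decay_total.
Proof. apply (proj1 decay_total_lub). now exists S. Qed.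

Lemma decay_total_le U : (forall S, decay_int S <= U) -> decay_total <= U.
Proof. intros HU. apply (proj2 decay_total_lub U). intros y [S ->]. apply HU. Qed.

Lemma decay_total_approx eps : 0 < eps -> exists S, decay_total - eps < decay_int S.
Proof.
  intros He. destruct (Classical_Prop.classic (exists S, decay_total - eps < decay_int S))
    as [H|H]; auto.
  exfalso. assert (decay_total <= decay_total - eps); [|lra].
  apply decay_total_le. intros S. apply Rnot_lt_le. intros HS. apply H. now exists S.
Qed.

Lemma Phi_ext_ge0 t : 0 <= Phi_ext t.
Proof.
  apply Rmult_le_pos; [left; apply exp_pos|]. pose proof (decay_int_le_total t); lra.
Qed.

Lemma is_derive_Phi_ext t : is_derive Phi_ext t (bext t * Phi_ext t - 1).
Proof.
  eapply is_derive_eq_deriv.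
  - apply is_derive_Rmult.
    + apply (is_derive_Rcomp exp bint); [apply is_derive_exp | apply is_derive_bint].
    + apply (is_derive_minus (K:=R_AbsRing) (fun _ => decay_total) decay_int).
      * apply is_derive_Rconst.
      * apply is_derive_decay_int.
  - unfold Phi_ext, decay. change (minus 0 (exp (- bint t))) with (0 - exp (- bint t)).
    rewrite exp_Ropp. field. apply Rgt_not_eq, exp_pos.
Qed.

Lemma Phi_ext_continuous t : continuous Phi_ext t.
Proof. eapply is_derive_continuous, is_derive_Phi_ext. Qed.

Lemma RInt_Phi_ext_ge0 t : 0 <= t -> 0 <= RInt Phi_ext 0 t.
Proof.
  intros Ht. apply RInt_ge_0; auto.
  - apply ex_RInt_continuous_R, Phi_ext_continuous.
  - intros; apply Phi_ext_ge0.
Qed.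

(* Beyond [Rmax T 1] the tail estimate gives [bext * Phi_ext <= 1 / (1 - c)];
   before, everything is bounded by continuity. *)
Lemma bext_Phi_ext_bounded :
  exists M, 0 <= M /\ forall t, 0 <= t -> bext t * Phi_ext t <= M.
Proof.
  set (T1 := Rmax T 1). assert (HT1 : 1 <= T1) by apply Rmax_r.
  destruct (continuous_bounded_segment bext 0 T1 ltac:(lra) (fun x _ => bext_continuous x))
    as [Kb [HKb HKb']].
  assert (HL : 0 <= decay_total) by (rewrite <- decay_int_0; apply decay_int_le_total).
  assert (Hc' : 0 < / (1 - c)) by (apply Rinv_0_lt_compat; lra).
  assert (HM : 0 <= Kb * exp (bint T1) * decay_total).
  { apply Rmult_le_pos; auto. apply Rmult_le_pos; auto. left; apply exp_pos. }
  exists (/ (1 - c) + Kb * exp (bint T1) * decay_total). split; [lra|].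
  intros t Ht. pose proof (bext_pos t). pose proof (exp_pos (bint t)).
  destruct (Rle_dec T1 t).
  - assert (HJ : decay_total - decay_int t <= decay t / bext t / (1 - c)).
    { assert (decay_total <= decay_int t + decay t / bext t / (1 - c)); [|lra].
      apply decay_total_le. intros S. now apply decay_int_tail. }
    assert (Hle : bext t * Phi_ext t <= bext t * (exp (bint t) * (decay t / bext t / (1 - c)))).
    { apply Rmult_le_compat_l; [lra|]. apply Rmult_le_compat_l; lra. }
    replace (bext t * (exp (bint t) * (decay t / bext t / (1 - c)))) with (/ (1 - c)) in Hle
      by (unfold decay; rewrite exp_Ropp; field; lra).
    lra.
  - assert (Hb : bext t <= Kb).
    { eapply Rle_trans; [apply Rle_abs | apply HKb']. lra. }
    assert (He : exp (bint t) <= exp (bint T1)).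
    { destruct (Req_dec (bint t) (bint T1)) as [->|]; [lra|].
      left; apply exp_increasing. pose proof (bint_le t T1 ltac:(lra)). lra. }
    assert (HJ : 0 <= decay_total - decay_int t <= decay_total).
    { pose proof (decay_int_le_total t). pose proof (decay_int_le 0 t Ht).
      rewrite decay_int_0 in *. lra. }
    assert (bext t * Phi_ext t <= Kb * (exp (bint T1) * decay_total)).
    { apply Rmult_le_compat; try lra; [apply Phi_ext_ge0|]. apply Rmult_le_compat; lra. }
    lra.
Qed.

(* [(Phi_ext ^ 2)' = 2 * Phi_ext * (bext * Phi_ext - 1) <= 2 * M * Phi_ext]. *)
Lemma Phi_ext_sq_le M : (forall t, 0 <= t -> bext t * Phi_ext t <= M) ->
  forall t, 0 <= t -> Phi_ext t ^ 2 <= Phi_ext 0 ^ 2 + 2 * M * RInt Phi_ext 0 t.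
Proof.
  intros HM t Ht.
  set (k := fun u => Phi_ext u * Phi_ext u - 2 * M * RInt Phi_ext 0 u).
  assert (Hk : k t <= k 0).
  { apply (nonincreasing_of_derive_nonpos k
      (fun u => 2 * Phi_ext u * (bext u * Phi_ext u - 1) - 2 * M * Phi_ext u)); auto.
    - intros u _. eapply is_derive_eq_deriv.
      + apply (is_derive_minus (K:=R_AbsRing) (fun u => Phi_ext u * Phi_ext u)
                 (fun u => 2 * M * RInt Phi_ext 0 u)).
        * apply is_derive_Rmult; apply is_derive_Phi_ext.
        * apply is_derive_Rscal, is_derive_RInt_0, Phi_ext_continuous.
      + change (minus ?a ?b) with (a - b). ring.
    - intros u Hu. pose proof (HM u ltac:(lra)). pose proof (Phi_ext_ge0 u).
      assert (0 <= Phi_ext u * (M - (bext u * Phi_ext u - 1))) by (apply Rmult_le_pos; lra).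
      lra. }
  unfold k in Hk. rewrite (RInt_point 0 Phi_ext : RInt Phi_ext 0 0 = 0) in Hk. nra.
Qed.

Lemma Phi_ext_growth : exists M K, 0 <= M /\ 0 <= K /\ forall t, 0 <= t ->
  bext t * Phi_ext t <= M /\ Phi_ext t ^ 2 <= K * (1 + RInt Phi_ext 0 t).
Proof.
  destruct bext_Phi_ext_bounded as [M [HM HbM]].
  exists M, (Phi_ext 0 ^ 2 + 2 * M). pose proof (pow2_ge_0 (Phi_ext 0)).
  split; [exact HM|]. split; [lra|]. intros t Ht. split; [now apply HbM|].
  pose proof (Phi_ext_sq_le M HbM t Ht). pose proof (RInt_Phi_ext_ge0 t Ht). nra.
Qed.

Lemma Phi_eq_Phi_ext t : 0 <= t -> Phi b t = Phi_ext t.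
Proof.
  intros Ht. apply is_RInt_gen_unique, filterlimi_locally. intros eps.
  pose proof (exp_pos (bint t)) as Hexp.
  destruct (decay_total_approx (eps / exp (bint t))) as [S0 HS0].
  { apply Rdiv_lt_0_compat; [apply cond_pos | exact Hexp]. }
  apply Filter_prod with (Q := fun a => a = t) (R := fun y => Rmax S0 t < y);
    [reflexivity | now exists (Rmax S0 t)|].
  intros a y -> Hy. cbv beta in Hy. pose proof (Rmax_l S0 t). pose proof (Rmax_r S0 t).
  simpl. exists (exp (bint t) * (decay_int y - decay_int t)). split.
  - apply is_RInt_ext with (fun s => exp (bint t) * decay s).
    + intros x Hx. rewrite Rmin_left, Rmax_right in Hx by lra.
      assert (Hb : RInt b t x = bint x - bint t).
      { rewrite (RInt_ext b bext); [apply RInt_sub_0, bext_continuous|].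
        intros z Hz. rewrite Rmin_left, Rmax_right in Hz by lra.
        unfold bext. rewrite Rmax_left by lra. reflexivity. }
      rewrite Hb. unfold decay. rewrite <- exp_plus. f_equal. ring.
    + apply (is_RInt_scal (V:=R_NormedModule) decay t y (exp (bint t))).
      replace (decay_int y - decay_int t) with (RInt decay t y).
      * apply (RInt_correct (V:=R_CompleteNormedModule)), ex_RInt_continuous_R.
        intros x. eapply is_derive_continuous, is_derive_decay.
      * apply RInt_sub_0. intros x. eapply is_derive_continuous, is_derive_decay.
  - change (Rabs (exp (bint t) * (decay_int y - decay_int t) - Phi_ext t) < eps).
    pose proof (decay_int_le S0 y ltac:(lra)). pose proof (decay_int_le_total y).
    replace (exp (bint t) * (decay_int y - decay_int t) - Phi_ext t)
      with (- (exp (bint t) * (decay_total - decay_int y))) by (unfold Phi_ext; ring).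
    rewrite Rabs_Ropp, Rabs_pos_eq by (apply Rmult_le_pos; lra).
    assert (Hlt : decay_total - decay_int y < eps / exp (bint t)) by lra.
    apply Rmult_lt_compat_l with (r := exp (bint t)) in Hlt; auto.
    replace (exp (bint t) * (eps / exp (bint t))) with (pos eps) in Hlt by (field; lra).
    exact Hlt.
Qed.

End PhiExtension.

Lemma rpow_pos_eq y a : 0 < y -> rpow y a = Rpower y a.
Proof. intros Hy. unfold rpow. destruct (Rle_dec y 0); lra. Qed.

Lemma rpow_nonpos y a : y <= 0 -> rpow y a = 0.
Proof. intros Hy. unfold rpow. destruct (Rle_dec y 0); lra. Qed.

Lemma rpow_ge0 y a : 0 <= rpow y a.
Proof. unfold rpow. destruct (Rle_dec y 0); [lra | left; apply exp_pos]. Qed.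

Lemma rpow_1 a : rpow 1 a = 1.
Proof. rewrite rpow_pos_eq by lra. unfold Rpower. now rewrite ln_1, Rmult_0_r, exp_0. Qed.

Lemma rpow_pred y a : 0 <= y -> rpow y a = y * rpow y (a - 1).
Proof.
  intros [Hy|<-]; [|rewrite !rpow_nonpos by lra; ring].
  rewrite !rpow_pos_eq by lra.
  replace a with ((a - 1) + 1) at 1 by ring. rewrite Rpower_plus, Rpower_1 by lra. ring.
Qed.

Lemma rpow_le_mul_pred y a K : y <= K -> 0 <= K -> rpow y a <= K * rpow y (a - 1).
Proof.
  intros HyK HK. destruct (Rle_dec y 0) as [Hy|Hy].
  - rewrite rpow_nonpos by exact Hy. apply Rmult_le_pos; [exact HK | apply rpow_ge0].
  - rewrite rpow_pred by lra. apply Rmult_le_compat_r; [apply rpow_ge0 | exact HyK].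
Qed.

Lemma rpow_rpow y a c : rpow (rpow y a) c = rpow y (a * c).
Proof.
  destruct (Rle_dec y 0).
  - rewrite !(rpow_nonpos y), rpow_nonpos by lra. reflexivity.
  - rewrite !(rpow_pos_eq y), rpow_pos_eq by (try apply exp_pos; lra). apply Rpower_mult.
Qed.

(* At [0] the difference quotient is [h ^ (a - 1)] for [h > 0] and [0] for
   [h < 0], hence the derivative [0] when [a > 1]. *)
Lemma is_derive_rpow a y : 1 < a -> is_derive (fun y => rpow y a) y (a * rpow y (a - 1)).
Proof.
  intros Ha. destruct (Rlt_le_dec 0 y) as [Hy|[Hy| ->]].
  - apply is_derive_ext_loc with (fun z => Rpower z a).
    + apply locally_Rabs with y; [lra|]. intros z Hz. apply Rabs_def2 in Hz.
      rewrite rpow_pos_eq by lra. reflexivity.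
    + rewrite rpow_pos_eq by lra. apply is_derive_Reals, derivable_pt_lim_power; lra.
  - apply is_derive_ext_loc with (fun _ => 0).
    + apply locally_Rabs with (- y); [lra|]. intros z Hz. apply Rabs_def2 in Hz.
      rewrite rpow_nonpos by lra. reflexivity.
    + rewrite rpow_nonpos, Rmult_0_r by lra. apply is_derive_Rconst.
  - rewrite rpow_nonpos, Rmult_0_r by lra. apply is_derive_Reals. intros eps Heps.
    assert (Hd : 0 < Rpower eps (/ (a - 1))) by apply exp_pos.
    exists (mkposreal _ Hd). intros h Hh0 Hh. cbn in Hh.
    rewrite Rplus_0_l, (rpow_nonpos 0), !Rminus_0_r by lra.
    destruct (Rle_dec h 0).
    + rewrite rpow_nonpos by lra. unfold Rdiv. rewrite Rmult_0_l, Rabs_R0. lra.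
    + rewrite rpow_pred, rpow_pos_eq by lra.
      replace (h * Rpower h (a - 1) / h) with (Rpower h (a - 1)) by (field; lra).
      rewrite Rabs_pos_eq by (left; apply exp_pos).
      rewrite Rabs_pos_eq in Hh by lra.
      apply Rlt_le_trans with (Rpower (Rpower eps (/ (a - 1))) (a - 1)).
      * apply Rlt_Rpower_l; lra.
      * rewrite Rpower_mult, Rinv_l, Rpower_1 by lra. lra.
Qed.

Lemma Derive_comp_C2 (h h1 h2 u u1 u2 : R -> R) :
  (forall y, is_derive h y (h1 y)) -> (forall y, is_derive h1 y (h2 y)) ->
  (forall t, is_derive u t (u1 t)) -> (forall t, is_derive u1 t (u2 t)) ->
  forall t, Derive (fun t => h (u t)) t = h1 (u t) * u1 t /\
    Derive (fun t => Derive (fun t => h (u t)) t) t = h2 (u t) * u1 t ^ 2 + h1 (u t) * u2 t.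
Proof.
  intros Hh Hh1 Hu Hu1.
  assert (D1 : forall t, Derive (fun t => h (u t)) t = h1 (u t) * u1 t).
  { intros t. apply is_derive_unique. eapply is_derive_eq_deriv.
    - apply (is_derive_Rcomp h u); [apply Hh | apply Hu].
    - ring. }
  intros t. split; [apply D1|].
  rewrite (Derive_ext (fun t => Derive (fun t => h (u t)) t) _ t D1).
  apply is_derive_unique. eapply is_derive_eq_deriv.
  - apply is_derive_Rmult; [apply (is_derive_Rcomp h1 u)|]; auto.
  - cbv beta. ring.
Qed.

Section Cutoff.

Variable eta : R -> R.
Hypothesis Heta_d1 : forall s, 0 < s -> ex_derive eta s.
Hypothesis Heta_d2 : forall s, 0 < s -> ex_derive (Derive eta) s.
Hypothesis Heta_c2 : forall s, 0 < s -> continuous (Derive (Derive eta)) s.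
Hypothesis Heta_one : forall s, 0 <= s <= 1/2 -> eta s = 1.

Definition eta_ext s := if Rle_dec s (1/2) then 1 else eta s.
Definition eta_ext1 := Derive eta_ext.
Definition eta_ext2 := Derive eta_ext1.

Lemma eta_ext_eq s : 0 < s -> eta_ext s = eta s.
Proof.
  intros Hs. unfold eta_ext. destruct (Rle_dec s (1/2)); auto. rewrite Heta_one; auto; lra.
Qed.

Lemma is_derive_eta_ext_lt_half s : s < 1/2 -> is_derive eta_ext s 0.
Proof.
  intros Hs. apply is_derive_ext_loc with (fun _ => 1); [|apply is_derive_Rconst].
  apply (filter_imp (fun z => z < 1/2)); [|now apply locally_lt].
  intros z Hz. unfold eta_ext. destruct (Rle_dec z (1/2)); [reflexivity | lra].
Qed.

Lemma eta_ext1_lt_half s : s < 1/2 -> eta_ext1 s = 0.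
Proof. intros Hs. now apply is_derive_unique, is_derive_eta_ext_lt_half. Qed.

Lemma eta_ext1_eq s : 0 < s -> eta_ext1 s = Derive eta s.
Proof.
  intros Hs. apply Derive_ext_loc.
  apply (filter_imp (fun z => 0 < z)); [apply eta_ext_eq | now apply locally_gt].
Qed.

Lemma is_derive_eta_ext s : is_derive eta_ext s (eta_ext1 s).
Proof.
  apply Derive_correct. destruct (Rlt_le_dec s (1/2)).
  - exists 0. now apply is_derive_eta_ext_lt_half.
  - exists (Derive eta s). apply is_derive_ext_loc with eta.
    + apply (filter_imp (fun z => 0 < z)); [|apply locally_gt; lra].
      intros z Hz. now rewrite eta_ext_eq.
    + apply Derive_correct, Heta_d1. lra.
Qed.

Lemma is_derive_eta_ext1_lt_half s : s < 1/2 -> is_derive eta_ext1 s 0.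
Proof.
  intros Hs. apply is_derive_ext_loc with (fun _ => 0); [|apply is_derive_Rconst].
  apply (filter_imp (fun z => z < 1/2)); [|now apply locally_lt].
  intros z Hz. now rewrite eta_ext1_lt_half.
Qed.

Lemma eta_ext2_lt_half s : s < 1/2 -> eta_ext2 s = 0.
Proof. intros Hs. now apply is_derive_unique, is_derive_eta_ext1_lt_half. Qed.

Lemma eta_ext2_eq s : 0 < s -> eta_ext2 s = Derive (Derive eta) s.
Proof.
  intros Hs. apply Derive_ext_loc.
  apply (filter_imp (fun z => 0 < z)); [apply eta_ext1_eq | now apply locally_gt].
Qed.

Lemma is_derive_eta_ext1 s : is_derive eta_ext1 s (eta_ext2 s).
Proof.
  apply Derive_correct. destruct (Rlt_le_dec s (1/2)).
  - exists 0. now apply is_derive_eta_ext1_lt_half.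
  - exists (Derive (Derive eta) s). apply is_derive_ext_loc with (Derive eta).
    + apply (filter_imp (fun z => 0 < z)); [|apply locally_gt; lra].
      intros z Hz. now rewrite eta_ext1_eq.
    + apply Derive_correct, Heta_d2. lra.
Qed.

Lemma eta_ext2_continuous s : 0 < s -> continuous eta_ext2 s.
Proof.
  intros Hs. apply continuous_ext_loc with (Derive (Derive eta)); [|now apply Heta_c2].
  apply (filter_imp (fun z => 0 < z)); [|now apply locally_gt].
  intros z Hz. now rewrite eta_ext2_eq.
Qed.

Lemma eta_ext_bounded : exists K0 K1 K2, 0 <= K0 /\ 0 <= K1 /\ 0 <= K2 /\
  forall s, 1/2 <= s <= 1 ->
    Rabs (eta_ext s) <= K0 /\ Rabs (eta_ext1 s) <= K1 /\ Rabs (eta_ext2 s) <= K2.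
Proof.
  destruct (continuous_bounded_segment eta_ext (1/2) 1 ltac:(lra)) as [K0 [H0 H0']].
  { intros x _. eapply is_derive_continuous, is_derive_eta_ext. }
  destruct (continuous_bounded_segment eta_ext1 (1/2) 1 ltac:(lra)) as [K1 [H1 H1']].
  { intros x _. eapply is_derive_continuous, is_derive_eta_ext1. }
  destruct (continuous_bounded_segment eta_ext2 (1/2) 1 ltac:(lra)) as [K2 [H2 H2']].
  { intros x Hx. apply eta_ext2_continuous. lra. }
  exists K0, K1, K2. repeat split; auto.
Qed.

Variable q : R.
Hypothesis Hq : 2 < q.

Definition cutoff s := rpow (eta_ext s) q.
Definition cutoff1 s := q * rpow (eta_ext s) (q - 1) * eta_ext1 s.
Definition cutoff2 s := q * (q - 1) * rpow (eta_ext s) (q - 2) * eta_ext1 s ^ 2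
                        + q * rpow (eta_ext s) (q - 1) * eta_ext2 s.

Lemma is_derive_cutoff s : is_derive cutoff s (cutoff1 s).
Proof.
  eapply is_derive_eq_deriv.
  - apply (is_derive_Rcomp (fun y => rpow y q) eta_ext);
      [apply is_derive_rpow; lra | apply is_derive_eta_ext].
  - unfold cutoff1. ring.
Qed.

Lemma is_derive_cutoff1 s : is_derive cutoff1 s (cutoff2 s).
Proof.
  eapply is_derive_eq_deriv.
  - apply is_derive_Rmult; [apply is_derive_Rscal|apply is_derive_eta_ext1].
    apply (is_derive_Rcomp (fun y => rpow y (q - 1)) eta_ext);
      [apply is_derive_rpow; lra | apply is_derive_eta_ext].
  - unfold cutoff2. replace (q - 1 - 1) with (q - 2) by ring. ring.
Qed.

Lemma cutoff_derivs_le K0 K1 K2 s : 0 <= K0 ->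
  Rabs (eta_ext s) <= K0 -> Rabs (eta_ext1 s) <= K1 -> Rabs (eta_ext2 s) <= K2 ->
  Rabs (cutoff1 s) <= q * K0 * K1 * rpow (eta_ext s) (q - 2) /\
  Rabs (cutoff2 s) <= (q * (q - 1) * K1 ^ 2 + q * K0 * K2) * rpow (eta_ext s) (q - 2).
Proof.
  intros HK0 Ke K1e K2e. unfold cutoff1, cutoff2. set (e := eta_ext s) in *.
  pose proof (rpow_ge0 e (q - 2)) as Hr. pose proof (rpow_ge0 e (q - 1)) as Hr1.
  assert (Hqe : 0 <= q * rpow e (q - 1) <= q * K0 * rpow e (q - 2)).
  { split; [apply Rmult_le_pos; lra|]. rewrite Rmult_assoc. apply Rmult_le_compat_l; [lra|].
    replace (q - 2) with (q - 1 - 1) by ring.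
    apply rpow_le_mul_pred; [|exact HK0]. eapply Rle_trans; [apply Rle_abs | exact Ke]. }
  assert (Hsq : eta_ext1 s ^ 2 <= K1 ^ 2).
  { pose proof (Rle_abs (eta_ext1 s)). pose proof (Rle_abs (- eta_ext1 s)).
    rewrite Rabs_Ropp in *. nra. }
  split.
  - rewrite Rabs_mult, (Rabs_pos_eq (q * _)) by apply Hqe.
    replace (q * K0 * K1 * rpow e (q - 2)) with ((q * K0 * rpow e (q - 2)) * K1) by ring.
    apply Rmult_le_compat; auto using Rabs_pos; apply Hqe.
  - assert (Rabs (q * (q - 1) * rpow e (q - 2) * eta_ext1 s ^ 2)
              <= q * (q - 1) * K1 ^ 2 * rpow e (q - 2)).
    { rewrite Rabs_pos_eq by (apply Rmult_le_pos; [repeat apply Rmult_le_pos|apply pow2_ge_0]; lra).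
      replace (q * (q - 1) * K1 ^ 2 * rpow e (q - 2)) with (q * (q - 1) * rpow e (q - 2) * K1 ^ 2)
        by ring.
      apply Rmult_le_compat_l; [repeat apply Rmult_le_pos|]; lra. }
    assert (Rabs (q * rpow e (q - 1) * eta_ext2 s) <= q * K0 * K2 * rpow e (q - 2)).
    { rewrite Rabs_mult, (Rabs_pos_eq (q * _)) by apply Hqe.
      replace (q * K0 * K2 * rpow e (q - 2)) with ((q * K0 * rpow e (q - 2)) * K2) by ring.
      apply Rmult_le_compat; auto using Rabs_pos; apply Hqe. }
    eapply Rle_trans; [apply Rabs_triang|]. lra.
Qed.

Variable p : R.
Hypothesis Hqp : q * (1 / p) = q - 2.

Definition cutoff_weight s := rpow (rpow (etaStar eta s) q) (1 / p).

Lemma cutoff_weight_eq s : 1/2 <= s -> cutoff_weight s = rpow (eta_ext s) (q - 2).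
Proof.
  intros Hs. unfold cutoff_weight, etaStar. destruct (Rlt_dec s (1/2)); [lra|].
  rewrite eta_ext_eq, rpow_rpow, Hqp by lra. reflexivity.
Qed.

(* Below [1/2] both derivatives of [cutoff] vanish; above, [cutoff_weight]
   is [eta ^ (q - 2)], the highest power of [eta] dividing both of them. *)
Lemma cutoff_derivs_bounded : exists A1 A2, 0 <= A1 /\ 0 <= A2 /\
  forall s, s <= 1 ->
    Rabs (cutoff1 s) <= A1 * cutoff_weight s /\ Rabs (cutoff2 s) <= A2 * cutoff_weight s.
Proof.
  destruct eta_ext_bounded as [K0 [K1 [K2 [HK0 [HK1 [HK2 HK]]]]]].
  exists (q * K0 * K1), (q * (q - 1) * K1 ^ 2 + q * K0 * K2).
  assert (HA1 : 0 <= q * K0 * K1) by (repeat apply Rmult_le_pos; lra).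
  assert (HA2 : 0 <= q * (q - 1) * K1 ^ 2 + q * K0 * K2).
  { apply Rplus_le_le_0_compat; repeat apply Rmult_le_pos; try apply pow2_ge_0; lra. }
  split; [exact HA1|]. split; [exact HA2|]. intros s Hs1.
  destruct (Rlt_le_dec s (1/2)) as [Hs|Hs].
  - pose proof (rpow_ge0 (rpow (etaStar eta s) q) (1 / p)) as Hw.
    unfold cutoff1, cutoff2. rewrite eta_ext1_lt_half, eta_ext2_lt_half by exact Hs.
    replace (0 ^ 2) with 0 by ring. rewrite !Rmult_0_r, Rplus_0_l, Rabs_R0.
    split; apply Rmult_le_pos; assumption.
  - rewrite cutoff_weight_eq by exact Hs.
    destruct (HK s (conj Hs Hs1)) as [Ke [K1e K2e]]. now apply cutoff_derivs_le.
Qed.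

End Cutoff.

Lemma normsq_ge0 N x : 0 <= normsq N x.
Proof. induction N; simpl; [lra|]. pose proof (pow2_ge_0 (x N)). lra. Qed.

Lemma normsq_upd_ge N x i h : (N <= i)%nat -> normsq N (upd x i h) = normsq N x.
Proof.
  induction N; intros Hi; simpl; [reflexivity|].
  rewrite IHN by lia. unfold upd. destruct (Nat.eqb_spec N i); [lia | reflexivity].
Qed.

Lemma normsq_upd N x i h : (i < N)%nat ->
  normsq N (upd x i h) = normsq N x - x i ^ 2 + h ^ 2.
Proof.
  induction N; intros Hi; [lia|]. simpl.
  destruct (Nat.eq_dec i N) as [->|Hne].
  - rewrite normsq_upd_ge by lia. unfold upd. rewrite Nat.eqb_refl. ring.
  - rewrite IHN by lia. unfold upd. destruct (Nat.eqb_spec N i); [lia | ring].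
Qed.

Lemma sq_le_normsq N x i : (i < N)%nat -> x i ^ 2 <= normsq N x.
Proof.
  induction N; intros Hi; [lia|]. simpl. pose proof (pow2_ge_0 (x N)).
  destruct (Nat.eq_dec i N) as [->|Hne].
  - pose proof (normsq_ge0 N x). lra.
  - pose proof (IHN ltac:(lia)). lra.
Qed.

Lemma sumN_abs_le N f K :
  (forall i, (i < N)%nat -> Rabs (f i) <= K) -> Rabs (sumN N f) <= INR N * K.
Proof.
  induction N; intros Hf; [simpl; rewrite Rabs_R0; lra|].
  change (sumN (S N) f) with (sumN N f + f N). rewrite S_INR.
  eapply Rle_trans; [apply Rabs_triang|].
  pose proof (IHN (fun i Hi => Hf i ltac:(lia))). pose proof (Hf N ltac:(lia)). lra.
Qed.

Lemma Rabs_mult_le X Y a c : Rabs X <= a -> Rabs Y <= c -> Rabs (X * Y) <= a * c.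
Proof. intros. rewrite Rabs_mult. apply Rmult_le_compat; auto using Rabs_pos. Qed.

Lemma second_order_bound c1 c2 v1 v2 A1 A2 w K1 K2 :
  Rabs c1 <= A1 * w -> Rabs c2 <= A2 * w -> v1 ^ 2 <= K1 -> Rabs v2 <= K2 ->
  Rabs (c2 * v1 ^ 2 + c1 * v2) <= (A2 * K1 + A1 * K2) * w.
Proof.
  intros H1 H2 Hv1 Hv2. eapply Rle_trans; [apply Rabs_triang|].
  assert (Hv1' : Rabs (v1 ^ 2) <= K1) by (rewrite Rabs_pos_eq by apply pow2_ge_0; exact Hv1).
  pose proof (Rabs_mult_le _ _ _ _ H2 Hv1'). pose proof (Rabs_mult_le _ _ _ _ H1 Hv2). nra.
Qed.

Lemma conj_exp_twice_gt2 p : 1 < p -> 2 < 2 * conj_exp p.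
Proof.
  intros Hp. unfold conj_exp. replace (p / (p - 1)) with (1 + / (p - 1)) by (field; lra).
  pose proof (Rinv_0_lt_compat (p - 1) ltac:(lra)). lra.
Qed.

Lemma conj_exp_twice_div p : 1 < p -> 2 * conj_exp p * (1 / p) = 2 * conj_exp p - 2.
Proof. intros Hp. unfold conj_exp. field. lra. Qed.

Section Lemma2p5.

Variables (p : R) (N : nat) (b eta : R -> R).
Hypothesis Hp : 1 < p.
Hypothesis Hb_der : forall t, 0 <= t -> ex_derive b t.
Hypothesis Hb_pos : forall t, 0 <= t -> 0 < b t.
Variables c T : R.
Hypothesis Hc : c < 1.
Hypothesis HT : forall t, T <= t -> Rabs (Derive b t) / (b t) ^ 2 <= c.
Hypothesis Heta_d1 : forall s, 0 < s -> ex_derive eta s.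
Hypothesis Heta_d2 : forall s, 0 < s -> ex_derive (Derive eta) s.
Hypothesis Heta_c2 : forall s, 0 < s -> continuous (Derive (Derive eta)) s.
Hypothesis Heta_one : forall s, 0 <= s <= 1/2 -> eta s = 1.
Hypothesis Heta_zero : forall s, 1 <= s -> eta s = 0.

Local Notation q := (2 * conj_exp p).

Definition s_ext R0 x t := / R0 * (1 + normsq N x + RInt (Phi_ext b) 0 t).

Lemma rho_eq x t : 0 <= t -> rho b N x t = 1 + normsq N x + RInt (Phi_ext b) 0 t.
Proof.
  intros Ht. unfold rho. f_equal. apply RInt_ext. intros y Hy.
  rewrite Rmin_left, Rmax_right in Hy by lra.
  apply (Phi_eq_Phi_ext b Hb_der Hb_pos c T Hc HT). lra.
Qed.

Lemma rho_ge1 x t : 0 <= t -> 1 <= rho b N x t.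
Proof.
  intros Ht. rewrite rho_eq by exact Ht. pose proof (normsq_ge0 N x).
  assert (0 <= RInt (Phi_ext b) 0 t) by (eapply RInt_Phi_ext_ge0; eauto). lra.
Qed.

Lemma sR_eq R0 x t : 0 <= t -> sR b N R0 x t = s_ext R0 x t.
Proof. intros Ht. unfold sR, s_ext. now rewrite rho_eq. Qed.

Lemma sR_le_1 R0 x t : 0 < R0 -> inP b N R0 x t -> sR b N R0 x t <= 1.
Proof.
  intros HR0 [Ht Hr]. unfold sR. replace 1 with (/ R0 * R0) by (field; lra).
  apply Rmult_le_compat_l; [left; apply Rinv_0_lt_compat|]; lra.
Qed.

Lemma psiR_eq R0 x t : 0 < R0 -> 0 <= t -> psiR b eta p N R0 x t = cutoff eta q (s_ext R0 x t).
Proof.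
  intros HR0 Ht.
  assert (Hs : 0 < sR b N R0 x t).
  { pose proof (rho_ge1 x t Ht). apply Rmult_lt_0_compat; [apply Rinv_0_lt_compat|]; lra. }
  unfold psiR, cutoff. rewrite <- sR_eq, eta_ext_eq by assumption. reflexivity.
Qed.

Lemma psiR_cutoff R0 : 0 < R0 -> forall x t,
  (inP b N (R0 / 2) x t -> psiR b eta p N R0 x t = 1) /\
  (0 <= t -> ~ inP b N R0 x t -> psiR b eta p N R0 x t = 0).
Proof.
  intros HR0 x t. assert (HiR : 0 < / R0) by (apply Rinv_0_lt_compat; lra). split.
  - intros [Ht Hr]. unfold psiR, sR. rewrite Heta_one; [apply rpow_1|].
    pose proof (rho_ge1 x t Ht). split; [apply Rmult_le_pos; lra|].
    replace (1/2) with (/ R0 * (R0 / 2)) by (field; lra). apply Rmult_le_compat_l; lra.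
  - intros Ht Hn. assert (Hr : R0 < rho b N x t).
    { apply Rnot_le_lt. intros Hr. apply Hn. now split. }
    unfold psiR, sR. rewrite Heta_zero; [apply rpow_nonpos; lra|].
    replace 1 with (/ R0 * R0) by (field; lra). apply Rmult_le_compat_l; lra.
Qed.

Lemma psiR_cutoff_derivs_bounded : exists A1 A2, 0 <= A1 /\ 0 <= A2 /\
  forall R0 x t, 0 < R0 -> inP b N R0 x t ->
    Rabs (cutoff1 eta q (s_ext R0 x t)) <= A1 * rpow (psiRstar b eta p N R0 x t) (1 / p) /\
    Rabs (cutoff2 eta q (s_ext R0 x t)) <= A2 * rpow (psiRstar b eta p N R0 x t) (1 / p).
Proof.
  destruct (cutoff_derivs_bounded eta Heta_d1 Heta_d2 Heta_c2 Heta_one q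
              (conj_exp_twice_gt2 p Hp) p (conj_exp_twice_div p Hp)) as [A1 [A2 [HA1 [HA2 HA]]]].
  exists A1, A2. split; [exact HA1|]. split; [exact HA2|].
  intros R0 x t HR0 Hin. rewrite <- sR_eq by apply Hin.
  apply HA, sR_le_1; assumption.
Qed.

Lemma Derive_psiR_time R0 x t : 0 < R0 -> 0 <= t ->
  Derive (fun s => psiR b eta p N R0 x s) t
    = cutoff1 eta q (s_ext R0 x t) * (/ R0 * Phi_ext b t) /\
  Derive (fun s => Derive (fun s' => psiR b eta p N R0 x s') s) t
    = cutoff2 eta q (s_ext R0 x t) * (/ R0 * Phi_ext b t) ^ 2
      + cutoff1 eta q (s_ext R0 x t) * (/ R0 * (bext b t * Phi_ext b t - 1)).
Proof.
  intros HR0 Ht.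
  assert (HD1 : forall t, 0 <= t -> Derive (fun s => psiR b eta p N R0 x s) t
                  = Derive (fun s => cutoff eta q (s_ext R0 x s)) t).
  { intros t' Ht'. apply Derive_ext_right. intros y Hy. apply psiR_eq; lra. }
  rewrite HD1 by exact Ht.
  rewrite (Derive_ext_right (fun s => Derive (fun s' => psiR b eta p N R0 x s') s)
             (fun s => Derive (fun s => cutoff eta q (s_ext R0 x s)) s) t)
    by (intros y Hy; apply HD1; lra).
  apply (Derive_comp_C2 (cutoff eta q) (cutoff1 eta q) (cutoff2 eta q) (s_ext R0 x)
           (fun t => / R0 * Phi_ext b t) (fun t => / R0 * (bext b t * Phi_ext b t - 1))).
  - intros y. eapply is_derive_cutoff; eauto using conj_exp_twice_gt2.
  - intros y. eapply is_derive_cutoff1; eauto using conj_exp_twice_gt2.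
  - intros s. apply is_derive_Rscal. eapply is_derive_eq_deriv.
    + apply (is_derive_Rplus (fun _ => 1 + normsq N x) (fun s => RInt (Phi_ext b) 0 s)).
      * apply is_derive_Rconst.
      * apply is_derive_RInt_0. eapply Phi_ext_continuous; eauto.
    + ring.
  - intros s. apply is_derive_Rscal. eapply is_derive_Phi_ext; eauto.
Qed.

Lemma Derive2_psiR_coord R0 x t i : 0 < R0 -> 0 <= t -> (i < N)%nat ->
  Derive (fun h => Derive (fun h' => psiR b eta p N R0 (upd x i h') t) h) (x i)
    = cutoff2 eta q (s_ext R0 x t) * (/ R0 * (2 * x i)) ^ 2
      + cutoff1 eta q (s_ext R0 x t) * (/ R0 * 2).
Proof.
  intros HR0 Ht Hi.
  set (u := fun h => / R0 * (1 + (normsq N x - x i ^ 2 + h ^ 2) + RInt (Phi_ext b) 0 t)).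
  assert (Hu : forall h, psiR b eta p N R0 (upd x i h) t = cutoff eta q (u h)).
  { intros h. rewrite psiR_eq by auto. unfold s_ext. now rewrite normsq_upd. }
  rewrite (Derive_ext _ (fun h => Derive (fun h' => cutoff eta q (u h')) h))
    by (intros h; apply Derive_ext; intros h'; apply Hu).
  replace (s_ext R0 x t) with (u (x i)) by (unfold u, s_ext; f_equal; ring).
  apply (Derive_comp_C2 (cutoff eta q) (cutoff1 eta q) (cutoff2 eta q) u
           (fun h => / R0 * (2 * h)) (fun _ => / R0 * 2)).
  - intros y. eapply is_derive_cutoff; eauto using conj_exp_twice_gt2.
  - intros y. eapply is_derive_cutoff1; eauto using conj_exp_twice_gt2.
  - intros h. apply is_derive_Rscal. eapply is_derive_eq_deriv.
    + apply is_derive_Rplus; [apply is_derive_Rplus|apply is_derive_Rconst].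
      * apply is_derive_Rconst.
      * apply is_derive_Rplus; [apply is_derive_Rconst|].
        apply is_derive_pow, is_derive_Rid.
    + simpl. ring.
  - intros h. apply is_derive_Rscal. eapply is_derive_eq_deriv.
    + apply is_derive_Rscal, is_derive_Rid.
    + ring.
Qed.

Lemma psiR_dt_bound : exists C1, 0 < C1 /\ forall R0, 0 < R0 -> forall x t, inP b N R0 x t ->
  Rabs (Derive (fun s => psiR b eta p N R0 x s) t)
    <= C1 / R0 * Phi b t * rpow (psiRstar b eta p N R0 x t) (1 / p).
Proof.
  destruct psiR_cutoff_derivs_bounded as [A1 [A2 [HA1 [_ HA]]]].
  exists (A1 + 1). split; [lra|]. intros R0 HR0 x t Hin.
  destruct (HA R0 x t HR0 Hin) as [H1 _]. destruct Hin as [Ht _].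
  rewrite (proj1 (Derive_psiR_time R0 x t HR0 Ht)).
  rewrite (Phi_eq_Phi_ext b Hb_der Hb_pos c T Hc HT t Ht).
  pose proof (rpow_ge0 (psiRstar b eta p N R0 x t) (1 / p)) as Hw.
  set (w := rpow (psiRstar b eta p N R0 x t) (1 / p)) in *.
  assert (HPhi : 0 <= / R0 * Phi_ext b t).
  { apply Rmult_le_pos; [left; apply Rinv_0_lt_compat; lra|]. eapply Phi_ext_ge0; eauto. }
  eapply Rle_trans.
  { apply Rabs_mult_le; [exact H1|]. rewrite Rabs_pos_eq by exact HPhi. apply Rle_refl. }
  unfold Rdiv. nra.
Qed.

Lemma psiR_laplacian_bound : exists C2, 0 < C2 /\ forall R0, 0 < R0 -> forall x t, inP b N R0 x t ->
  Rabs (laplacian N (fun y => psiR b eta p N R0 y t) x)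
    <= C2 / R0 * rpow (psiRstar b eta p N R0 x t) (1 / p).
Proof.
  destruct psiR_cutoff_derivs_bounded as [A1 [A2 [HA1 [HA2 HA]]]].
  pose proof (pos_INR N).
  exists (INR N * (A2 * 4 + A1 * 2) + 1). split; [nra|]. intros R0 HR0 x t Hin.
  destruct (HA R0 x t HR0 Hin) as [H1 H2]. destruct Hin as [Ht Hr].
  pose proof (rpow_ge0 (psiRstar b eta p N R0 x t) (1 / p)) as Hw.
  set (w := rpow (psiRstar b eta p N R0 x t) (1 / p)) in *.
  assert (HiR : 0 < / R0) by (apply Rinv_0_lt_compat; lra).
  unfold laplacian. eapply Rle_trans.
  - apply sumN_abs_le with (K := (A2 * (4 * / R0) + A1 * (2 * / R0)) * w).
    intros i Hi. rewrite Derive2_psiR_coord by assumption.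
    apply second_order_bound; auto.
    + assert (Hxi : x i ^ 2 <= R0).
      { pose proof (sq_le_normsq N x i Hi). rewrite rho_eq in Hr by exact Ht.
        assert (0 <= RInt (Phi_ext b) 0 t) by (eapply RInt_Phi_ext_ge0; eauto). lra. }
      replace ((/ R0 * (2 * x i)) ^ 2) with (4 * / R0 * (x i ^ 2 * / R0)) by (field; lra).
      assert (x i ^ 2 * / R0 <= 1).
      { replace 1 with (R0 * / R0) by (field; lra). apply Rmult_le_compat_r; lra. }
      assert (0 <= x i ^ 2 * / R0) by (apply Rmult_le_pos; [apply pow2_ge_0|lra]). nra.
    + rewrite Rabs_pos_eq; lra.
  - unfold Rdiv. nra.
Qed.

Lemma psiR_dtt_bound : exists C3, 0 < C3 /\ forall R0, 0 < R0 -> forall x t, inP b N R0 x t ->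
  Rabs (Derive (fun s => Derive (fun s' => psiR b eta p N R0 x s') s) t)
    <= C3 / R0 * rpow (psiRstar b eta p N R0 x t) (1 / p).
Proof.
  destruct psiR_cutoff_derivs_bounded as [A1 [A2 [HA1 [HA2 HA]]]].
  destruct (Phi_ext_growth b Hb_der Hb_pos c T Hc HT) as [M [K [HM [HK HMK]]]].
  exists (A2 * K + A1 * (M + 1) + 1). split; [nra|]. intros R0 HR0 x t Hin.
  destruct (HA R0 x t HR0 Hin) as [H1 H2]. destruct Hin as [Ht Hr].
  destruct (HMK t Ht) as [HbPhi HPhi2].
  pose proof (rpow_ge0 (psiRstar b eta p N R0 x t) (1 / p)) as Hw.
  set (w := rpow (psiRstar b eta p N R0 x t) (1 / p)) in *.
  assert (HiR : 0 < / R0) by (apply Rinv_0_lt_compat; lra).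
  rewrite (proj2 (Derive_psiR_time R0 x t HR0 Ht)).
  eapply Rle_trans;
    [apply (second_order_bound _ _ _ _ A1 A2 w (K * / R0) ((M + 1) * / R0) H1 H2)|].
  - assert (HKR : Phi_ext b t ^ 2 <= K * R0).
    { rewrite rho_eq in Hr by exact Ht. pose proof (normsq_ge0 N x).
      eapply Rle_trans; [exact HPhi2|]. apply Rmult_le_compat_l; lra. }
    replace ((/ R0 * Phi_ext b t) ^ 2) with (Phi_ext b t ^ 2 * / R0 * / R0) by (field; lra).
    apply Rmult_le_compat_r; [lra|].
    replace K with (K * R0 * / R0) by (field; lra). apply Rmult_le_compat_r; lra.
  - assert (0 <= bext b t * Phi_ext b t).
    { apply Rmult_le_pos; [left; eapply bext_pos; eauto | eapply Phi_ext_ge0; eauto]. }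
    rewrite Rabs_mult, Rabs_pos_eq, Rmult_comm by lra.
    apply Rmult_le_compat_r; [lra|]. apply Rabs_le. lra.
  - unfold Rdiv. nra.
Qed.

End Lemma2p5.

Theorem lemma2p5 (p : R) (N : nat) (b eta : R -> R)
  (Hp : 1 < p)
  (* b in C^1 on (a neighbourhood of) [0, oo) *)
  (Hb_der : forall t, 0 <= t -> ex_derive b t)
  (Hb_cont : forall t, 0 <= t -> continuous (Derive b) t)
  (Hb_pos : forall t, 0 <= t -> 0 < b t)
  (* limsup_{t -> oo} |b'(t)| / b(t)^2 < 1 *)
  (Hb_limsup : exists c, c < 1 /\ exists T, forall t, T <= t ->
                 Rabs (Derive b t) / (b t) ^ 2 <= c)
  (* eta in C^2([0,oo)) (at 0 this is automatic since eta = 1 on [0,1/2]) *)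
  (Heta_d1 : forall s, 0 < s -> ex_derive eta s)
  (Heta_d2 : forall s, 0 < s -> ex_derive (Derive eta) s)
  (Heta_c2 : forall s, 0 < s -> continuous (Derive (Derive eta)) s)
  (Heta_one : forall s, 0 <= s <= 1/2 -> eta s = 1)
  (Heta_dec : forall s1 s2, 1/2 < s1 -> s1 <= s2 -> s2 < 1 -> eta s2 <= eta s1)
  (Heta_zero : forall s, 1 <= s -> eta s = 0) :
  (* (i) *)
  (forall R0, 0 < R0 -> forall x t,
      (inP b N (R0 / 2) x t -> psiR b eta p N R0 x t = 1) /\
      (0 <= t -> ~ inP b N R0 x t -> psiR b eta p N R0 x t = 0)) /\
  (* (ii) *)
  (exists C1, 0 < C1 /\ forall R0, 0 < R0 -> forall x t, inP b N R0 x t ->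
      Rabs (Derive (fun s => psiR b eta p N R0 x s) t)
        <= C1 / R0 * Phi b t * rpow (psiRstar b eta p N R0 x t) (1 / p)) /\
  (* (iii) *)
  (exists C2, 0 < C2 /\ forall R0, 0 < R0 -> forall x t, inP b N R0 x t ->
      Rabs (laplacian N (fun y => psiR b eta p N R0 y t) x)
        <= C2 / R0 * rpow (psiRstar b eta p N R0 x t) (1 / p)) /\
  (* (iv) *)
  (~ ex_RInt_gen (fun t => / b t) (at_point 0) (Rbar_locally p_infty) ->
    exists C3, 0 < C3 /\ forall R0, 0 < R0 -> forall x t, inP b N R0 x t ->
      Rabs (Derive (fun s => Derive (fun s' => psiR b eta p N R0 x s') s) t)
        <= C3 / R0 * rpow (psiRstar b eta p N R0 x t) (1 / p)).
Proof.
  destruct Hb_limsup as [c [Hc [T HT]]].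
  split; [|split; [|split]].
  - eapply psiR_cutoff; eauto.
  - eapply psiR_dt_bound; eauto.
  - eapply psiR_laplacian_bound; eauto.
  -
    intros _. eapply psiR_dtt_bound; eauto.
Qed.
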